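(* Let $A\in\mathbb{R}^{n\times r}$, $L\in\mathbb{R}^{s\times n}$ and $0<\alpha\le\beta$ be such that $\alpha\|Ay\|_1\le\|LAy\|_1\le\beta\|Ay\|_1$ for all $y\in\mathbb{R}^r$. Then for every integer $t\ge1$ and every $X\in\mathbb{R}^{r\times t}$, $$\frac{\alpha}{2}\|AX\|_{1,2}\le\|LAX\|_{1,2}\le2\beta\|AX\|_{1,2}.$$
   Context: For a matrix $M$, $\|M\|_{1,2}=\sum_i\|M_{i*}\|_2$ is the sum of Euclidean norms of its rows. *)

From HB Require Import structures.
From mathcomp Require Import all_boot all_order all_algebra.
Set Implicit Arguments. Unset Strict Implicit. Unset Printing Implicit Defensive.
Import Order.TTheory GRing.Theory Num.Theory.
Local Open Scope ring_scope.

Definition norm1 (R : rcfType) (n : nat) (v : 'cV[R]_n) : R :=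
  \sum_(i < n) `|v i 0|.

Definition norm12 (R : rcfType) (m k : nat) (M : 'M[R]_(m, k)) : R :=
  \sum_(i < m) Num.sqrt (\sum_(j < k) (M i j) ^+ 2).

(** Averaging over random signs compares [||.||_{1,2}] with [||.||_1]: for
    a row [w] and independent uniform signs [e], the Khintchine inequality
    [5/9 |w|_2 <= E |<w, e>| <= |w|_2] holds.  The upper bound is Jensen;
    the lower bound follows from the moments [E <w,e>^2 = |w|_2^2] and
    [E <w,e>^4 <= 3 |w|_2^4] and the inequality
    [x^2/N <= |x| + 4 x^4/(27 N^3)] with [N = |w|_2].  Summing over rows,
    [||M||_{1,2}] is equivalent, up to the factor [5/9], to the mean of
    [||M e||_1].  Taking [y = X e] in the hypothesis and averaging thus
    transfers a lower [l1] bound to [||.||_{1,2}] at the cost of a factor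
    [5/9 >= 1/2]; the upper bound is the lower one with the roles of [AX]
    and [LAX] exchanged and [alpha] replaced by [1/beta]. *)

From HB Require Import structures.
From mathcomp Require Import all_boot all_order all_algebra.
From mathcomp Require Import ring lra.
Import Order.TTheory GRing.Theory Num.Theory.
Local Open Scope ring_scope.

Section SignAverage.

Variable R : rcfType.

Definition upd (e : nat -> R) (k : nat) (v : R) : nat -> R :=
  fun j => if j == k then v else e j.

(* The mean of [f e] over the [2^k] vectors [e] with [e j = 1 \/ e j = -1]
   for [j < k] and [e j = 0] for [j >= k]. *)
Fixpoint sign_avg (k : nat) (f : (nat -> R) -> R) : R :=
  if k is k'.+1 then
    (sign_avg k' (fun e => f (upd e k' 1)) +
     sign_avg k' (fun e => f (upd e k' (-1)))) / 2
  else f (fun _ => 0).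

Lemma eq_sign_avg k (f g : (nat -> R) -> R) :
  (forall e, f e = g e) -> sign_avg k f = sign_avg k g.
Proof.
elim: k f g => [|k IH] f g fg /=; first exact: fg.
by congr ((_ + _) / 2); apply: IH => e; apply: fg.
Qed.

Lemma ler_sign_avg k (f g : (nat -> R) -> R) :
  (forall e, f e <= g e) -> sign_avg k f <= sign_avg k g.
Proof.
elim: k f g => [|k IH] f g fg /=; first exact: fg.
by rewrite ler_pM2r ?invr_gt0 ?ltr0n // lerD ?IH.
Qed.

Lemma sign_avgD k (f g : (nat -> R) -> R) :
  sign_avg k (fun e => f e + g e) = sign_avg k f + sign_avg k g.
Proof.
elim: k f g => [|k IH] f g //=.
by rewrite (IH (fun e => f (upd e k 1))) (IH (fun e => f (upd e k (-1)))); ring.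
Qed.

Lemma sign_avgZ k (c : R) (f : (nat -> R) -> R) :
  sign_avg k (fun e => c * f e) = c * sign_avg k f.
Proof.
elim: k f => [|k IH] f //=.
by rewrite (IH (fun e => f (upd e k 1))) (IH (fun e => f (upd e k (-1)))); ring.
Qed.

Lemma sign_avg_cst k (c : R) : sign_avg k (fun _ => c) = c.
Proof. by elim: k => [|k IH] //=; rewrite IH; field. Qed.

Lemma sign_avg_sum k m (F : 'I_m -> (nat -> R) -> R) :
  sign_avg k (fun e => \sum_(i < m) F i e) = \sum_(i < m) sign_avg k (F i).
Proof.
elim: m F => [|m IH] F.
  rewrite big_ord0 -[RHS](sign_avg_cst k 0).
  by apply: eq_sign_avg => e; rewrite big_ord0.
rewrite big_ord_recr /= -IH -sign_avgD.
by apply: eq_sign_avg => e; rewrite big_ord_recr.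
Qed.

Lemma sqr_sign_avg_le k (f : (nat -> R) -> R) :
  sign_avg k f ^+ 2 <= sign_avg k (fun e => f e ^+ 2).
Proof.
set m := sign_avg k f.
have amgm : sign_avg k (fun e => 2 * m * f e)
            <= sign_avg k (fun e => f e ^+ 2 + m ^+ 2).
  apply: ler_sign_avg => e; rewrite -subr_ge0.
  have -> : f e ^+ 2 + m ^+ 2 - 2 * m * f e = (f e - m) ^+ 2 by ring.
  exact: sqr_ge0.
rewrite sign_avgZ sign_avgD sign_avg_cst -/m in amgm; lra.
Qed.

Lemma sum_mul_upd k (w e : nat -> R) v :
  \sum_(j < k.+1) w j * upd e k v j = \sum_(j < k) w j * e j + w k * v.
Proof.
rewrite big_ord_recr /= /upd eqxx; congr (_ + _).
by apply: eq_bigr => j _; rewrite ltn_eqF.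
Qed.

Lemma sign_avg_shift k (w : nat -> R) (c : R) (g : R -> R) :
  sign_avg k.+1 (fun e => g (c + \sum_(j < k.+1) w j * e j))
  = (sign_avg k (fun e => g ((c + w k) + \sum_(j < k) w j * e j)) +
     sign_avg k (fun e => g ((c - w k) + \sum_(j < k) w j * e j))) / 2.
Proof.
by congr ((_ + _) / 2); apply: eq_sign_avg => e; rewrite sum_mul_upd;
  congr g; ring.
Qed.

Lemma sign_avg_sqr k (w : nat -> R) (c : R) :
  sign_avg k (fun e => (c + \sum_(j < k) w j * e j) ^+ 2)
  = c ^+ 2 + \sum_(j < k) w j ^+ 2.
Proof.
elim: k c => [|k IH] c; first by rewrite /= !big_ord0 !addr0.
by rewrite (sign_avg_shift _ _ _ (fun x => x ^+ 2)) !IH big_ord_recr /=; field.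
Qed.

Lemma sign_avg_expr4_le k (w : nat -> R) (c : R) :
  sign_avg k (fun e => (c + \sum_(j < k) w j * e j) ^+ 4)
  <= c ^+ 4 + 6 * c ^+ 2 * \sum_(j < k) w j ^+ 2
     + 3 * (\sum_(j < k) w j ^+ 2) ^+ 2.
Proof.
elim: k c => [|k IH] c; first by rewrite /= !big_ord0 expr0n /= !mulr0 !addr0.
rewrite (sign_avg_shift _ _ _ (fun x => x ^+ 4)) big_ord_recr /=.
set Q := \sum_(j < k) w j ^+ 2.
pose bound d := d ^+ 4 + 6 * d ^+ 2 * Q + 3 * Q ^+ 2.
apply: (@le_trans _ _ ((bound (c + w k) + bound (c - w k)) / 2)).
  by rewrite ler_pM2r ?invr_gt0 ?ltr0n // lerD ?IH.
have w4 : 0 <= w k ^+ 4 by rewrite -[4%N]/(2 * 2)%N exprM sqr_ge0.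
rewrite /bound; lra.
Qed.

(* The difference of the two sides is
   [(2|x| - 3N)^2 (|x| + 3N) |x| / (27 N^3)]. *)
Lemma sqr_le_abs_quartic (x N : R) : 0 < N ->
  N^-1 * x ^+ 2 <= `|x| + 4 / (27 * N ^+ 3) * x ^+ 4.
Proof.
move=> N_gt0; set u : R := `|x|.
have x2 : x ^+ 2 = u ^+ 2 by rewrite real_normK ?num_real.
have x4 : x ^+ 4 = u ^+ 4 by rewrite -[4%N]/(2 * 2)%N !exprM x2.
have u_ge0 : 0 <= u by rewrite normr_ge0.
have three_N : 0 <= 3 * N by rewrite mulr_ge0 // ltW.
rewrite x4 x2 -subr_ge0.
have -> : u + 4 / (27 * N ^+ 3) * u ^+ 4 - N^-1 * u ^+ 2
          = (2 * u - 3 * N) ^+ 2 * (u + 3 * N) * u / (27 * N ^+ 3).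
  by field; rewrite lt0r_neq0.
apply: divr_ge0; last by rewrite mulr_ge0 // exprn_ge0 // ltW.
by rewrite mulr_ge0 // mulr_ge0 ?sqr_ge0 ?addr_ge0.
Qed.

Lemma sign_avg_norm_le k (w : nat -> R) :
  sign_avg k (fun e => `|\sum_(j < k) w j * e j|)
  <= Num.sqrt (\sum_(j < k) w j ^+ 2).
Proof.
set m := sign_avg k _.
have m_ge0 : 0 <= m.
  by rewrite -(sign_avg_cst k 0); apply: ler_sign_avg => e; apply: normr_ge0.
rewrite -(ger0_norm m_ge0) -sqrtr_sqr ler_wsqrtr //.
apply: le_trans (sqr_sign_avg_le _ _) _.
have := sign_avg_sqr k w 0; rewrite expr0n add0r => <-.
by apply: ler_sign_avg => e; rewrite add0r real_normK ?num_real.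
Qed.

Lemma sign_avg_norm_ge k (w : nat -> R) :
  5 / 9 * Num.sqrt (\sum_(j < k) w j ^+ 2)
  <= sign_avg k (fun e => `|\sum_(j < k) w j * e j|).
Proof.
set Q := \sum_(j < k) w j ^+ 2; set N := Num.sqrt Q.
set S := fun e : nat -> R => \sum_(j < k) w j * e j.
have Q_ge0 : 0 <= Q by rewrite sumr_ge0 // => j _; apply: sqr_ge0.
have NQ : N ^+ 2 = Q by rewrite sqr_sqrtr.
have [->|N_neq0] := eqVneq N 0.
  by rewrite mulr0 -(sign_avg_cst k 0); apply: ler_sign_avg => e; apply: normr_ge0.
have N_gt0 : 0 < N by rewrite lt0r N_neq0 sqrtr_ge0.
have mom2 : sign_avg k (fun e => S e ^+ 2) = N ^+ 2.
  rewrite NQ (eq_sign_avg k _ (fun e => (0 + S e) ^+ 2)) => [|e]; last by rewrite add0r.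
  by rewrite sign_avg_sqr /Q; ring.
have mom4 : sign_avg k (fun e => S e ^+ 4) <= 3 * (N ^+ 2) ^+ 2.
  rewrite NQ (eq_sign_avg k _ (fun e => (0 + S e) ^+ 4)) => [|e]; last by rewrite add0r.
  by apply: le_trans (sign_avg_expr4_le k w 0) _; rewrite /Q; lra.
have quartic := ler_sign_avg k _ _ (fun e => sqr_le_abs_quartic (S e) _ N_gt0).
rewrite sign_avgZ mom2 sign_avgD sign_avgZ in quartic.
have c_ge0 : 0 <= 4 / (27 * N ^+ 3) by rewrite divr_ge0 ?mulr_ge0 ?exprn_ge0 ?ltW.
have := ler_wpM2l c_ge0 mom4.
have -> : 4 / (27 * N ^+ 3) * (3 * (N ^+ 2) ^+ 2) = 4 / 9 * N.
  by field; rewrite lt0r_neq0.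
have NN : N^-1 * N ^+ 2 = N by rewrite expr2 mulKf.
rewrite NN /S /= in quartic; lra.
Qed.

Definition sign_col k (e : nat -> R) : 'cV[R]_k := \col_(j < k) e j.

(* Row [i] of [M] as a [nat]-indexed sequence, zero from [k] on. *)
Definition row_seq {p k : nat} (M : 'M[R]_(p, k)) (i : 'I_p) (j : nat) : R :=
  oapp (M i) 0 (insub j).

Lemma row_seqE {p k : nat} (M : 'M[R]_(p, k)) i (j : 'I_k) : row_seq M i j = M i j.
Proof. by rewrite /row_seq valK. Qed.

Lemma mul_sign_col {p k : nat} (M : 'M[R]_(p, k)) e i :
  (M *m sign_col k e) i 0 = \sum_(j < k) row_seq M i j * e j.
Proof. by rewrite mxE; apply: eq_bigr => j _; rewrite row_seqE mxE. Qed.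

Lemma norm12_row_seq {p k : nat} (M : 'M[R]_(p, k)) :
  norm12 M = \sum_(i < p) Num.sqrt (\sum_(j < k) row_seq M i j ^+ 2).
Proof.
by apply: eq_bigr => i _; congr Num.sqrt; apply: eq_bigr => j _; rewrite row_seqE.
Qed.

Lemma sign_avg_norm1 {p k : nat} (M : 'M[R]_(p, k)) :
  sign_avg k (fun e => norm1 (M *m sign_col k e))
  = \sum_(i < p) sign_avg k (fun e => `|\sum_(j < k) row_seq M i j * e j|).
Proof.
rewrite -sign_avg_sum; apply: eq_sign_avg => e.
by apply: eq_bigr => i _; rewrite mul_sign_col.
Qed.

Lemma sign_avg_norm1_le {p k : nat} (M : 'M[R]_(p, k)) :
  sign_avg k (fun e => norm1 (M *m sign_col k e)) <= norm12 M.
Proof.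
by rewrite sign_avg_norm1 norm12_row_seq; apply: ler_sum => i _;
  apply: sign_avg_norm_le.
Qed.

Lemma sign_avg_norm1_ge {p k : nat} (M : 'M[R]_(p, k)) :
  5 / 9 * norm12 M <= sign_avg k (fun e => norm1 (M *m sign_col k e)).
Proof.
by rewrite sign_avg_norm1 norm12_row_seq mulr_sumr; apply: ler_sum => i _;
  apply: sign_avg_norm_ge.
Qed.

Lemma norm12_ge_of_norm1_ge {n s k : nat} (B : 'M[R]_(n, k)) (C : 'M[R]_(s, k))
    (a : R) :
  0 <= a -> (forall y : 'cV[R]_k, a * norm1 (B *m y) <= norm1 (C *m y)) ->
  a / 2 * norm12 B <= norm12 C.
Proof.
move=> a_ge0 BC.
have aB_ge0 : 0 <= a * norm12 B.
  by rewrite mulr_ge0 // sumr_ge0 // => i _; apply: sqrtr_ge0.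
have avgBC := ler_sign_avg k _ _ (fun e => BC (sign_col k e)).
rewrite sign_avgZ in avgBC.
have lowB := ler_wpM2l a_ge0 (sign_avg_norm1_ge B).
have upC := sign_avg_norm1_le C.
lra.
Qed.

End SignAverage.

Theorem mainTheorem7 (R : rcfType) (n r s : nat)
  (A : 'M[R]_(n, r)) (L : 'M[R]_(s, n)) (alpha beta : R)
  (halpha : 0 < alpha) (hab : alpha <= beta)
  (hemb : forall y : 'cV[R]_r,
      alpha * norm1 (A *m y) <= norm1 (L *m (A *m y)) /\
      norm1 (L *m (A *m y)) <= beta * norm1 (A *m y))
  (t : nat) (ht : (1 <= t)%N) (X : 'M[R]_(r, t)) :
  alpha / 2 * norm12 (A *m X) <= norm12 (L *m (A *m X)) /\
  norm12 (L *m (A *m X)) <= 2 * beta * norm12 (A *m X).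
Proof.
have beta_gt0 : 0 < beta by apply: lt_le_trans hab.
have emb y : alpha * norm1 (A *m X *m y) <= norm1 (L *m (A *m X) *m y) /\
             norm1 (L *m (A *m X) *m y) <= beta * norm1 (A *m X *m y).
  by rewrite -!mulmxA; apply: hemb.
split; first by apply: norm12_ge_of_norm1_ge (ltW halpha) _ => y; case: (emb y).
have lower : beta^-1 / 2 * norm12 (L *m (A *m X)) <= norm12 (A *m X).
  apply: norm12_ge_of_norm1_ge; first by rewrite invr_ge0 ltW.
  by move=> y; case: (emb y) => _ up; rewrite ler_pdivrMl // mulrC.
rewrite [leLHS](_ : _ = 2 * beta * (beta^-1 / 2 * norm12 (L *m (A *m X)))).
  by rewrite ler_pM2l ?mulr_gt0.
by field; rewrite lt0r_neq0.
Qed.
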